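(* Let $F/\mathbb{F}_q$ be a function field of genus $g$ with full constant field $\mathbb{F}_q$, $\sigma\in\mathrm{Aut}(F/\mathbb{F}_q)$, $N,m,l$ positive integers, $P_1,\dots,P_N$ rational places such that the $mN$ places $P_i^{\sigma^j}$ ($1\le i\le N$, $0\le j\le m-1$) are pairwise distinct rational places, and $D$ a divisor of degree $e$ with $D^\sigma=D$ and no $P_i^{\sigma^j}$ in $\mathrm{Supp}(D)$. Let $s$ be an integer with $1\le s\le m$ and let $\mathbf{y}=(y_{i,j})_{1\le i\le N,\,1\le j\le m}$ with $y_{i,j}\in\mathbb{F}_q$ be any received word. Put \[\kappa=\left\lceil\frac{N(m-s+1)-el+(s+1)(g-1)+1}{e(s+1)}\right\rceil.\] Then there exist $A_0\in\mathcal{L}((\kappa+l)D)$ and $A_1,\dots,A_s\in\mathcal{L}(\kappa D)$, not all zero, such that the polynomial $Q(Y_1,\dots,Y_s)=A_0+A_1Y_1+\cdots+A_sY_s\in F[Y_1,\dots,Y_s]$ satisfies \[A_0(P_i^{\sigma^j})+A_1(P_i^{\sigma^j})y_{i,j+1}+\cdots+A_s(P_i^{\sigma^j})y_{i,j+s}=0\] for all $i=1,\dots,N$ and $j=0,1,\dots,m-s$.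
   Context: For a place $P$ and $f\in F$ with $\nu_P(f)\ge 0$, $f(P)$ denotes the residue class of $f$ at $P$. For $\phi\in\mathrm{Aut}(F/\mathbb{F}_q)$, $P^{\phi}=\{\phi(x):x\in P\}$ and $G^{\phi}=\sum m_PP^{\phi}$ for $G=\sum m_PP$. $\mathcal{L}(G)=\{f\in F^*:\mathrm{div}(f)+G\ge 0\}\cup\{0\}$. *)

From HB Require Import structures.
From mathcomp Require Import all_boot all_order all_algebra all_field.
Set Implicit Arguments. Unset Strict Implicit. Unset Printing Implicit Defensive.
Import Order.TTheory GRing.Theory Num.Theory.
Local Open Scope ring_scope.

Section FunctionFields.
Variables (K : finFieldType) (F : fieldType) (iota : {rmorphism K -> F}).

(* F/K is an algebraic function field in one variable: there is x in F
   transcendental over K with [F : K(x)] finite. *)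
Definition is_function_field : Prop :=
  exists x : F,
    (forall p : {poly K}, p != 0 -> (map_poly iota p).[x] != 0) /\
    exists (n : nat) (b : 'I_n -> F), forall z : F,
      exists r : 'I_n -> F,
        (forall i, exists p q : {poly K},
            (map_poly iota q).[x] != 0 /\
            r i = (map_poly iota p).[x] / (map_poly iota q).[x]) /\
        z = \sum_(i < n) r i * b i.

Definition full_constant_field : Prop :=
  forall z : F, (exists p : {poly K}, p != 0 /\ root (map_poly iota p) z) ->
    exists a : K, z = iota a.

(* Places of F/K are represented by their normalized discrete valuations
   nu_P : F -> int (with the convention nu_P 0 = 0 in place of +oo). *)
Definition is_place (v : F -> int) : Prop :=
  [/\ v 0 = 0,
      (forall x y, x != 0 -> y != 0 -> v (x * y) = v x + v y),
      (forall x y, x != 0 -> y != 0 -> x + y != 0 ->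
          Num.min (v x) (v y) <= v (x + y)),
      (exists t, t != 0 /\ v t = 1) &
      (forall a : K, a != 0 -> v (iota a) = 0)].

Definition inO (v : F -> int) (f : F) : bool := (f == 0) || (0 <= v f).
Definition inP (v : F -> int) (f : F) : bool := (f == 0) || (0 < v f).

Definition place_deg (v : F -> int) (n : nat) : Prop :=
  exists b : 'I_n -> F,
    [/\ (forall i, inO v (b i)),
        (forall c : 'I_n -> K, inP v (\sum_(i < n) iota (c i) * b i) ->
            forall i, c i = 0) &
        (forall f, inO v f -> exists c : 'I_n -> K,
            inP v (f - \sum_(i < n) iota (c i) * b i))].

Definition rational_place (v : F -> int) : Prop := is_place v /\ place_deg v 1.

(* residue class f(P) in O_P/P = K, for a rational place P and f in O_P *)
Definition resid (v : F -> int) (f : F) : K :=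
  odflt 0 [pick a : K | inP v (f - iota a)].

Definition is_divisor (D : (F -> int) -> int) : Prop :=
  (forall w, D w != 0 -> is_place w) /\
  exists (n : nat) (ws : 'I_n -> (F -> int)),
    forall w, D w != 0 -> exists i, w = ws i.

Definition div_deg (D : (F -> int) -> int) (e : int) : Prop :=
  exists (n : nat) (ws : 'I_n -> (F -> int)) (d : 'I_n -> nat),
    [/\ injective ws,
        (forall w, D w != 0 -> exists i, w = ws i),
        (forall i, is_place (ws i) /\ place_deg (ws i) (d i)) &
        e = \sum_(i < n) D (ws i) * (d i)%:Z].

Definition scale_div (k : int) (D : (F -> int) -> int) : (F -> int) -> int :=
  fun w => k * D w.

Definition inL (G : (F -> int) -> int) (f : F) : Prop :=
  f = 0 \/ (forall w, is_place w -> 0 <= w f + G w).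

Definition K_indep (n : nat) (f : 'I_n -> F) : Prop :=
  forall c : 'I_n -> K, \sum_(i < n) iota (c i) * f i = 0 -> forall i, c i = 0.

Definition ell_ge (A : (F -> int) -> int) (k : int) : Prop :=
  exists (n : nat) (f : 'I_n -> F), k <= n%:Z /\ (forall i, inL A (f i)) /\ K_indep f.

(* g = max { deg A - ell(A) + 1 : A divisor }  (Stichtenoth, Def. 1.4.15) *)
Definition is_genus (g : int) : Prop :=
  (forall A d, is_divisor A -> div_deg A d -> ell_ge A (d + 1 - g)) /\
  (exists A d, [/\ is_divisor A, div_deg A d & ~ ell_ge A (d + 2 - g)]).

End FunctionFields.

Definition place_act (F : Type) (sigma_inv : F -> F) (v : F -> int) : F -> int :=
  fun x => v (sigma_inv x).

Definition place_iter (F : Type) (sigma_inv : F -> F) (j : nat) (v : F -> int)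
  : F -> int := iter j (place_act sigma_inv) v.

(* ceiling of a / b for b > 0 *)
Definition ceil_div (a b : int) : int := - ((- a) %/ b)%Z.

(* By Riemann's inequality L((kappa+l)D) and L(kappa D) have dimensions at least
   (kappa+l)e + 1 - g and kappa e + 1 - g, so the coefficients of A_0, ..., A_s with
   respect to bases of these spaces give more unknowns than the N(m-s+1)
   interpolation conditions, which are K-linear because the places are rational and
   disjoint from Supp D, so that every A_k is integral there and taking residues is
   K-linear.  The choice of kappa is exactly what makes the count work. *)
From HB Require Import structures.
From mathcomp Require Import all_boot all_order all_algebra all_field.
Import Order.TTheory GRing.Theory Num.Theory.
From mathcomp Require Import zify.
Local Open Scope ring_scope.


Lemma homogeneous_system_nontrivial {K : fieldType} {T E : finType} (M : T -> E -> K) :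
  (#|E| < #|T|)%N ->
  exists c : T -> K, (exists t, c t != 0) /\ forall e, \sum_t c t * M t e = 0.
Proof.
move=> card_lt.
pose A : 'M[K]_(#|T|, #|E|) := \matrix_(i, j) M (enum_val i) (enum_val j).
have kerA_neq0 : kermx A != 0.
  rewrite kermx_eq0 /row_free; apply: contraTneq card_lt => rankA.
  by rewrite -leqNgt -rankA rank_leq_col.
have [i row_neq0] : exists i, row i (kermx A) != 0.
  apply/existsP; apply: contraR kerA_neq0; rewrite negb_exists => /forallP h.
  by apply/eqP/row_matrixP => i; rewrite row0; apply/eqP/negPn/h.
pose u := row i (kermx A).
have uA0 : u *m A = 0 by rewrite /u -row_mul mulmx_ker row0.
exists (fun t => u 0 (enum_rank t)); split.
  have [j uj_neq0] : exists j, u 0 j != 0.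
    apply/existsP; apply: contraR row_neq0; rewrite negb_exists => /forallP h.
    by apply/eqP/rowP => j; move/negPn/eqP: (h j); rewrite !mxE.
  by exists (enum_val j); rewrite enum_valK.
move=> e; transitivity ((u *m A) 0 (enum_rank e)); last by rewrite uA0 mxE.
rewrite mxE [RHS](reindex (@enum_rank T)) /=; last first.
  by exists enum_val => x _; [rewrite enum_rankK | rewrite enum_valK].
by apply: eq_bigr => t _; rewrite !mxE !enum_rankK.
Qed.

Section Residues.
Context {K : finFieldType} {F : fieldType} {iota : {rmorphism K -> F}} {v : F -> int}.
Hypothesis v_place : is_place iota v.

Lemma place_mul {x y} : x != 0 -> y != 0 -> v (x * y) = v x + v y.
Proof. by case: v_place => _ vM *; apply: vM. Qed.

Lemma place_add {x y} : x != 0 -> y != 0 -> x + y != 0 ->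
  Num.min (v x) (v y) <= v (x + y).
Proof. by case: v_place => _ _ vD *; apply: vD. Qed.

Lemma place_const a : a != 0 -> v (iota a) = 0.
Proof. by case: v_place => _ _ _ _ vK *; apply: vK. Qed.

Lemma place1 : v 1 = 0.
Proof.
have := @place_mul 1 1 (oner_neq0 F) (oner_neq0 F).
by rewrite mulr1 -[LHS]addr0 => /addrI.
Qed.

Lemma inO_const a : inO v (iota a).
Proof.
rewrite /inO; have [->|a0] := eqVneq a 0; first by rewrite rmorph0 eqxx.
by rewrite place_const // lexx orbT.
Qed.

Lemma inP_add {x y} : inP v x -> inP v y -> inP v (x + y).
Proof.
rewrite /inP; have [->|x0] := eqVneq x 0; first by rewrite add0r.
have [->|y0] := eqVneq y 0; first by rewrite addr0 (negbTE x0).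
have [->|xy0] //= := eqVneq (x + y) 0.
by move=> vx vy; apply: lt_le_trans (place_add x0 y0 xy0); rewrite lt_min vx vy.
Qed.

Lemma inP_mul {z x} : inO v z -> inP v x -> inP v (z * x).
Proof.
rewrite /inP /inO; have [->|z0] := eqVneq z 0; first by rewrite mul0r eqxx.
have [->|x0] := eqVneq x 0; first by rewrite mulr0 eqxx.
by rewrite mulf_eq0 (negbTE z0) (negbTE x0) /= place_mul //; apply: ltr_wpDl.
Qed.

Lemma inP_opp {x} : inP v x -> inP v (- x).
Proof. by rewrite -mulN1r -(rmorphN1 iota); apply: inP_mul (inO_const _). Qed.

Lemma inP_const a : inP v (iota a) -> a = 0.
Proof.
rewrite /inP fmorph_eq0; have [//|a0] := eqVneq a 0.
by rewrite place_const // ltxx.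
Qed.

Lemma residE {f a} : inP v (f - iota a) -> resid iota v f = a.
Proof.
move=> fa; rewrite /resid; case: pickP => [b fb|/(_ a)]; last by rewrite fa.
apply/eqP; rewrite -subr_eq0; apply/eqP/inP_const; rewrite rmorphB.
have -> : iota b - iota a = (f - iota a) + - (f - iota b).
  by rewrite opprB [RHS]addrC [RHS]addrA subrK.
exact: inP_add fa (inP_opp fb).
Qed.

Hypothesis v_rational : place_deg iota v 1.

Lemma resid_inP f : inO v f -> inP v (f - iota (resid iota v f)).
Proof.
have [b [_ _ b_span]] := v_rational => f_int.
have [c1 c1P] : exists c1 : 'I_1 -> K, inP v (1 - \sum_(i < 1) iota (c1 i) * b i).
  by apply: b_span; rewrite -(rmorph1 iota) inO_const.
have [c cP] := b_span f f_int.
rewrite big_ord1 in c1P; rewrite big_ord1 in cP.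
have c10 : c1 ord0 != 0.
  apply: contraTneq c1P => ->.
  by rewrite rmorph0 mul0r subr0 /inP oner_eq0 place1 ltxx.
suff fP : inP v (f - iota (c ord0 / c1 ord0)) by rewrite (residE fP).
have -> : f - iota (c ord0 / c1 ord0) = (f - iota (c ord0) * b ord0)
    + iota (c ord0 / c1 ord0) * - (1 - iota (c1 ord0) * b ord0).
  by rewrite opprB mulrBr mulrA -rmorphM mulfVK // mulr1 addrA subrK.
exact: inP_add cP (inP_mul (inO_const _) (inP_opp c1P)).
Qed.

Lemma resid_lin {n} (c : 'I_n -> K) {f : 'I_n -> F} : (forall i, inO v (f i)) ->
  resid iota v (\sum_i iota (c i) * f i) = \sum_i c i * resid iota v (f i).
Proof.
move=> f_int; apply: residE; rewrite rmorph_sum -sumrB.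
apply: (big_ind (inP v)); [by rewrite /inP eqxx | exact: @inP_add |].
by move=> i _; rewrite rmorphM -mulrBr inP_mul ?inO_const ?resid_inP.
Qed.

End Residues.

Definition in_span {K : finFieldType} {F : fieldType} (iota : {rmorphism K -> F})
  {n} (f : 'I_n -> F) (x : F) : Prop :=
  exists c : 'I_n -> K, x = \sum_i iota (c i) * f i.

Section RiemannRochSpaces.
Context {K : finFieldType} {F : fieldType} {iota : {rmorphism K -> F}}.

Lemma inL_add {G x y} : inL iota G x -> inL iota G y -> inL iota G (x + y).
Proof.
move=> [->|Lx]; first by rewrite add0r.
move=> [->|Ly]; first by rewrite addr0; right.
have [->|xy0] := eqVneq (x + y) 0; [by left | right => w w_place].
have [->|x0] := eqVneq x 0; first by rewrite add0r; apply: Ly.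
have [->|y0] := eqVneq y 0; first by rewrite addr0; apply: Lx.
have := place_add w_place x0 y0 xy0; rewrite -(lerD2r (G w)); apply: le_trans.
by rewrite addr_minl le_min Lx ?Ly.
Qed.

Lemma inL_scale {G} a {x} : inL iota G x -> inL iota G (iota a * x).
Proof.
have [->|a0] := eqVneq a 0; first by rewrite rmorph0 mul0r; left.
move=> [->|Lx]; first by rewrite mulr0; left.
have [->|x0] := eqVneq x 0; first by rewrite mulr0; left.
right=> w w_place.
by rewrite (place_mul w_place) ?fmorph_eq0 // (place_const w_place) // add0r; apply: Lx.
Qed.

Lemma inL_span {G n} {f : 'I_n -> F} {x} :
  (forall i, inL iota G (f i)) -> in_span iota f x -> inL iota G x.
Proof.
move=> Lf [c ->]; apply: (big_ind (inL iota G)); [by left | by move=> ? ?; apply: inL_add |].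
by move=> i _; apply: inL_scale.
Qed.

Lemma inL_inO {G w f} : is_place iota w -> G w = 0 -> inL iota G f -> inO w f.
Proof.
move=> w_place Gw0 [->|Lf]; first by rewrite /inO eqxx.
by rewrite /inO; move: (Lf w w_place); rewrite Gw0 addr0 => ->; rewrite orbT.
Qed.

Lemma scale_div_divisor k {D} : is_divisor iota D -> is_divisor iota (scale_div k D).
Proof.
case=> D_places [n [ws D_supp]].
by split=> [w|]; [|exists n, ws => w]; rewrite /scale_div mulf_eq0 negb_or =>
  /andP[_]; [apply: D_places | apply: D_supp].
Qed.

Lemma scale_div_deg k {D e} : div_deg iota D e -> div_deg iota (scale_div k D) (k * e).
Proof.
case=> n [ws [d [ws_inj D_supp ws_places ->]]]; exists n, ws, d; split => //.
  by move=> w; rewrite /scale_div mulf_eq0 negb_or => /andP[_]; apply: D_supp.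
by rewrite mulr_sumr; apply: eq_bigr => i _; rewrite /scale_div mulrA.
Qed.

Lemma riemann_basis {g} k {D e} : is_genus iota g -> is_divisor iota D -> div_deg iota D e ->
  exists n (f : 'I_n -> F),
    [/\ k * e + 1 - g <= n%:Z, forall i, inL iota (scale_div k D) (f i) & K_indep iota f].
Proof.
move=> [riemann _] D_div D_deg.
have [n [f [n_ge [Lf f_indep]]]] :=
  riemann _ _ (scale_div_divisor k D_div) (scale_div_deg k D_deg).
by exists n, f.
Qed.

End RiemannRochSpaces.

Section ResidueRelation.
Context {K : finFieldType} {F : fieldType} {iota : {rmorphism K -> F}}.
Context {E : finType} {w : E -> F -> int}.
Hypothesis w_rational : forall x, rational_place iota (w x).
Context {n0 n1 : nat} (s : nat) {f0 : 'I_n0 -> F} {f1 : 'I_n1 -> F} (y : E -> nat -> K).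
Hypotheses (f0_int : forall x a, inO (w x) (f0 a)) (f1_int : forall x b, inO (w x) (f1 b)).
Hypotheses (f0_indep : K_indep iota f0) (f1_indep : K_indep iota f1).

(* The unknowns are the coordinates of A_0 on f0 and of A_1, ..., A_s on f1. *)
Lemma exists_resid_relation : (#|E| < n0 + s * n1)%N ->
  exists A : nat -> F,
    [/\ in_span iota f0 (A 0%N),
        (forall k, (1 <= k <= s)%N -> in_span iota f1 (A k)),
        (exists k, (k <= s)%N /\ A k != 0) &
        (forall x, resid iota (w x) (A 0%N)
           + \sum_(1 <= k < s.+1) resid iota (w x) (A k) * y x k = 0)].
Proof.
move=> card_lt.
pose M (t : 'I_n0 + 'I_s * 'I_n1) x : K := match t with
  | inl a => resid iota (w x) (f0 a)
  | inr (q, b) => resid iota (w x) (f1 b) * y x q.+1 end.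
have [|c [[t ct_neq0] c_rel]] := homogeneous_system_nontrivial M.
  by rewrite card_sum card_prod !card_ord.
pose c1 q b := if insub q is Some q' then c (inr (q', b)) else 0.
have c1E (q : 'I_s) b : c1 q b = c (inr (q, b)) by rewrite /c1 valK.
pose A k := if k is q.+1 then \sum_b iota (c1 q b) * f1 b
            else \sum_a iota (c (inl a)) * f0 a.
exists A; split; first by exists (fun a => c (inl a)).
- by case=> // q _; exists (c1 q).
- case: t ct_neq0 => [a|[q b]] ct_neq0.
    exists 0%N; split => //; apply: contra_neq ct_neq0 => A0.
    exact: f0_indep A0 a.
  exists q.+1; split; first exact: ltn_ord.
  by apply: contra_neq ct_neq0 => Aq; rewrite -c1E; apply: f1_indep Aq b.
- move=> x; have [w_place w_deg] := w_rational x.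
  rewrite -[RHS](c_rel x) big_sumType /=; congr (_ + _).
    by rewrite (resid_lin w_place w_deg _ (f0_int x)).
  rewrite big_add1 /= big_mkord (eq_bigr (fun q : 'I_s => \sum_b c (inr (q, b)) *
     (resid iota (w x) (f1 b) * y x q.+1))); first by rewrite pair_big; apply: eq_bigr => -[].
  move=> q _; rewrite (resid_lin w_place w_deg _ (f1_int x)) mulr_suml.
  by apply: eq_bigr => b _; rewrite c1E mulrA.
Qed.

End ResidueRelation.

Lemma ceil_div_mulr (a b : int) : 0 < b -> a <= ceil_div a b * b.
Proof. by move=> b_gt0; rewrite /ceil_div mulNr lerNr lez_floor ?gt_eqF. Qed.

Lemma unknowns_exceed_conditions {C s l n0 n1 : nat} {e g k : int} :
  C%:Z - e * l%:Z + s.+1%:Z * (g - 1) + 1 <= k * (e * s.+1%:Z) ->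
  (k + l%:Z) * e + 1 - g <= n0%:Z -> k * e + 1 - g <= n1%:Z ->
  (C < n0 + s * n1)%N.
Proof.
move=> k_ge n0_ge n1_ge; have := ler_wpM2l (ler0n _ s) n1_ge.
rewrite -ltz_nat PoszD PoszM; move: k_ge n0_ge; rewrite -[s.+1]addn1 PoszD.
nia.
Qed.

Theorem lemma2p3
  (K : finFieldType) (F : fieldType) (iota : {rmorphism K -> F})
  (g : int)
  (sigma : {rmorphism F -> F}) (sigma_inv : F -> F)
  (N m l : nat) (P : nat -> (F -> int)) (D : (F -> int) -> int) (e : int)
  (s : nat) (y : nat -> nat -> K) :
  is_function_field iota ->
  full_constant_field iota ->
  is_genus iota g ->
  cancel sigma sigma_inv -> cancel sigma_inv sigma ->
  (forall a : K, sigma (iota a) = iota a) ->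
  (0 < N)%N -> (0 < m)%N -> (0 < l)%N ->
  (forall i j, (1 <= i <= N)%N -> (j < m)%N ->
     rational_place iota (place_iter sigma_inv j (P i))) ->
  (forall i j i' j', (1 <= i <= N)%N -> (j < m)%N ->
     (1 <= i' <= N)%N -> (j' < m)%N -> (i, j) <> (i', j') ->
     place_iter sigma_inv j (P i) <> place_iter sigma_inv j' (P i')) ->
  is_divisor iota D ->
  div_deg iota D e ->
  0 < e ->
  (forall w, D (fun x => w (sigma x)) = D w) ->
  (forall i j, (1 <= i <= N)%N -> (j < m)%N -> D (place_iter sigma_inv j (P i)) = 0) ->
  (1 <= s <= m)%N ->
  let kappa := ceil_div
      ((N * (m - s + 1))%:Z - e * l%:Z + (s.+1)%:Z * (g - 1) + 1)
      (e * (s.+1)%:Z) in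
  exists A : nat -> F,
    [/\ inL iota (scale_div (kappa + l%:Z) D) (A 0%N),
        (forall k, (1 <= k <= s)%N -> inL iota (scale_div kappa D) (A k)),
        (exists k, (k <= s)%N /\ A k != 0) &
        (forall i j, (1 <= i <= N)%N -> (j <= m - s)%N ->
           resid iota (place_iter sigma_inv j (P i)) (A 0%N)
           + \sum_(1 <= k < s.+1)
               resid iota (place_iter sigma_inv j (P i)) (A k) * y i (j + k)%N
           = 0)].
Proof.
move=> _ _ genus _ _ _ _ _ _ rational _ D_div D_deg e_gt0 _ D_off /andP[s_gt0 s_le_m] kappa.
have [n0 [f0 [n0_ge Lf0 f0_indep]]] := riemann_basis (kappa + l%:Z) genus D_div D_deg.
have [n1 [f1 [n1_ge Lf1 f1_indep]]] := riemann_basis kappa genus D_div D_deg.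
pose E := ('I_N * 'I_(m - s).+1)%type.
pose w (x : E) := place_iter sigma_inv x.2 (P x.1.+1).
have w_range (x : E) : (1 <= x.1.+1 <= N)%N /\ (x.2 < m)%N.
  by have := ltn_ord x.1; have := ltn_ord x.2; lia.
have w_rational (x : E) : rational_place iota (w x).
  by have [] := w_range x; apply: rational.
have D_w0 (x : E) : D (w x) = 0.
  by have [] := w_range x; apply: D_off.
have w_int k f x : inL iota (scale_div k D) f -> inO (w x) f.
  by apply: inL_inO (w_rational x).1 _; rewrite /scale_div D_w0 mulr0.
have [|A [A0_span Ak_span A_neq0 A_rel]] := exists_resid_relation w_rational s
  (fun x k => y x.1.+1 (x.2 + k)%N) (fun x a => w_int _ _ x (Lf0 a))
  (fun x b => w_int _ _ x (Lf1 b)) f0_indep f1_indep.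
  rewrite card_prod !card_ord -[(m - s).+1]addn1.
  apply: unknowns_exceed_conditions _ n0_ge n1_ge; apply: ceil_div_mulr.
  by rewrite mulr_gt0.
exists A; split => //; first exact: inL_span A0_span.
  by move=> k /Ak_span; apply: inL_span.
move=> [|i] // j /andP[_ i_lt] j_le.
exact: (A_rel (Ordinal i_lt, Ordinal (j_le : (j < (m - s).+1)%N))).
Qed.
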